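(* Let $\alpha\in(0,1)$ and $n\in\mathbb{N}$, and let $G$ be a graph on $n$ vertices with $\delta(G)\geq \alpha n$. If $u,v$ are vertices of $G$ such that there exists a walk of even length between $u$ and $v$, then there exists a walk of even length at most $4/\alpha$ between $u$ and $v$.
   Context: Graphs are finite and simple; $\delta(G)$ is the minimum degree. The length of a walk is its number of edges. *)

From HB Require Import structures.
From mathcomp Require Import all_boot all_order all_algebra.
From mathcomp Require Import all_reals.
Set Implicit Arguments. Unset Strict Implicit. Unset Printing Implicit Defensive.

Definition simple_graph (T : finType) (e : rel T) : Prop :=
  symmetric e /\ irreflexive e.

Definition deg (T : finType) (e : rel T) (x : T) : nat := #|[set y | e x y]|.

(* A walk from u to v of length k: a sequence p of k vertices such that
   u :: p is an e-path ending at v (length = number of edges = size p). *)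
Definition walk_of_length (T : finType) (e : rel T) (u v : T) (k : nat) : Prop :=
  exists p : seq T, [/\ path e u p, last u p = v & size p = k].

From mathcomp Require Import all_boot all_order all_algebra.
From mathcomp Require Import all_reals.
From mathcomp Require Import zify lra.
From Stdlib Require Import Classical.
Set Implicit Arguments. Unset Strict Implicit. Unset Printing Implicit Defensive.
Import Order.TTheory GRing.Theory Num.Theory.

(* Take an even u-v walk w_0 ... w_k of minimal even length. For a < b the
   vertices w_(4a) and w_(4b) have no common neighbour z: otherwise the walk
   w_0 ... w_(4a) z w_(4b) ... w_k would be an even walk of length
   k - (4b - 4a) + 2 < k. So the k/4 + 1 vertices w_(4a) have pairwise
   disjoint neighbourhoods, each of size at least alpha n, whence
   (k/4 + 1) alpha n <= n and k <= 4/alpha. *)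

Lemma ex_minP (P : nat -> Prop) :
  (exists n, P n) -> exists n, P n /\ forall m, m < n -> ~ P m.
Proof.
move=> [n Pn]; elim/ltn_ind: n Pn => n IHn Pn.
case: (classic (exists m, m < n /\ P m)) => [[m [lt_mn Pm]] | no_smaller].
  exact: IHn lt_mn Pm.
by exists n; split=> // m lt_mn Pm; apply: no_smaller; exists m.
Qed.

Lemma sum_card_disjoint_le (T I : finType) (F : I -> {set T}) :
  (forall i j, i != j -> [disjoint F i & F j]) -> \sum_i #|F i| <= #|T|.
Proof.
move=> disjF; rewrite (eq_bigr (fun i => \sum_(x in F i) 1)); last first.
  by move=> i _; rewrite sum1_card.
by rewrite -(partition_disjoint_bigcup _ _ disjF) sum1_card max_card.
Qed.

Section Walks.
Variables (T : finType) (e : rel T).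

Lemma walk_cat u w v k1 k2 :
  walk_of_length e u w k1 -> walk_of_length e w v k2 ->
  walk_of_length e u v (k1 + k2).
Proof.
move=> [p [pathp lastp sizep]] [q [pathq lastq sizeq]]; exists (p ++ q).
by rewrite cat_path last_cat size_cat lastp pathp pathq lastq sizep sizeq.
Qed.

Lemma walk_split u p i : path e u p -> i <= size p ->
  walk_of_length e u (last u (take i p)) i /\
  walk_of_length e (last u (take i p)) (last u p) (size p - i).
Proof.
rewrite -{1}(cat_take_drop i p) cat_path => /andP[path_take path_drop] le_ip.
split; first by exists (take i p); rewrite size_take_min (minn_idPl le_ip).
by exists (drop i p); rewrite -last_cat cat_take_drop size_drop.
Qed.

Hypothesis e_sym : symmetric e.

Lemma walk_shortcut u p i j z :
  path e u p -> i <= j <= size p ->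
  e (last u (take i p)) z -> e (last u (take j p)) z ->
  walk_of_length e u (last u p) (i + 2 + (size p - j)).
Proof.
move=> pathp /andP[le_ij le_jp] e_iz e_jz.
have [to_i _] := walk_split pathp (leq_trans le_ij le_jp).
have [_ from_j] := walk_split pathp le_jp.
have via_z : walk_of_length e (last u (take i p)) (last u (take j p)) 2.
  by exists [:: z; last u (take j p)]; rewrite /= e_iz e_sym e_jz.
exact: walk_cat (walk_cat to_i via_z) from_j.
Qed.

Variables (u : T) (p : seq T).
Hypotheses (pathp : path e u p) (even_p : ~~ odd (size p)).
Hypothesis min_p :
  forall k, k < size p -> ~~ odd k -> ~ walk_of_length e u (last u p) k.

Let w i := last u (take i p).

Lemma min_even_walk_disjoint_nbhd a b :
  a != b -> 4 * a <= size p -> 4 * b <= size p ->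
  [disjoint [set y | e (w (4 * a)) y] & [set y | e (w (4 * b)) y]].
Proof.
wlog lt_ab : a b / a < b => [wlog_ab | _ le_ap le_bp].
  rewrite neq_ltn => /orP[lt_ab | lt_ba] le_ap le_bp.
    by rewrite wlog_ab // ltn_eqF.
  by rewrite disjoint_sym wlog_ab // ltn_eqF.
rewrite -setI_eq0; apply/set0Pn => -[z]; rewrite !inE => /andP[e_az e_bz].
have shortcut := walk_shortcut pathp _ e_az e_bz.
apply: (min_p _ _ (shortcut _)); [lia | | lia].
by move: even_p; rewrite -!dvdn2; lia.
Qed.

Lemma min_even_walk_sum_deg_le :
  \sum_(a < (size p %/ 4).+1) deg e (w (4 * a)) <= #|T|.
Proof.
apply: sum_card_disjoint_le => a b neq_ab.
apply: min_even_walk_disjoint_nbhd => //.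
  by have := ltn_ord a; lia.
by have := ltn_ord b; lia.
Qed.

End Walks.

Local Open Scope ring_scope.

Lemma card_mul_le_sum (R : numDomainType) (I : finType) (d : I -> nat) (c : R) :
  (forall i, c <= (d i)%:R) -> #|I|%:R * c <= (\sum_i d i)%:R.
Proof.
by move=> le_c_d; rewrite natr_sum mulr_natl -sumr_const; apply: ler_sum.
Qed.

Theorem proposition4p5 (R : realType) (alpha : R) (T : finType) (e : rel T)
  (Hg : simple_graph e) (Ha0 : 0 < alpha) (Ha1 : alpha < 1)
  (Hdeg : forall x : T, alpha * (#|T|)%:R <= (deg e x)%:R)
  (u v : T) :
  (exists k : nat, ~~ odd k /\ walk_of_length e u v k) ->
  exists k : nat, [/\ ~~ odd k, k%:R <= 4 / alpha & walk_of_length e u v k].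
Proof.
move=> /ex_minP[k [[even_k walk_k] min_k]]; exists k; split=> //.
move: walk_k even_k min_k => -[p [pathp <- <-]] even_p min_p.
have := min_even_walk_sum_deg_le Hg.1 pathp even_p
  (fun m lt_m even_m walk_m => min_p m lt_m (conj even_m walk_m)).
set m := (size p %/ 4).+1 => sum_le.
have n_gt0 : 0 < #|T|%:R :> R by rewrite ltr0n; apply/card_gt0P; exists u.
have : m%:R * (alpha * #|T|%:R) <= #|T|%:R :> R.
  rewrite -[m in m%:R]card_ord.
  apply: le_trans (card_mul_le_sum (fun _ => Hdeg _)) _.
  by rewrite ler_nat; apply: sum_le.
rewrite mulrA ger_pMl // => m_alpha_le1.
have k_le : (size p)%:R <= 4 * m%:R :> R by rewrite -natrM ler_nat /m; lia.
rewrite ler_pdivlMr //; nra.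
Qed.
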